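(* Let $G$ be a prime $\{P_5,\overline{P_5},C_5\}$-free graph. Then $G$ has an antisimplicial vertex, or $G$ admits a 1-join.
   Context: All graphs are finite and simple. $P_n$ is the path on $n$ vertices, $C_n$ the cycle of length $n$, $\overline{G}$ the complement. $G$ is $H$-free if it has no induced subgraph isomorphic to $H$. A vertex $b\notin X$ is mixed on $X$ if it has both a neighbor and a non-neighbor in $X$. A homogeneous set is a set $X\subseteq V(G)$ with $1<|X|<|V(G)|$ such that no vertex outside $X$ is mixed on $X$. $G$ is prime if $|V(G)|\ge4$ and has no homogeneous set. A vertex $v$ is antisimplicial if $V(G)\setminus N(v)$ is a stable set. $G$ admits a 1-join if $V(G)$ can be partitioned into four non-empty pairwise disjoint sets $(A,B,C,D)$ such that $A$ is anticomplete to $C\cup D$ (no edges between them), and $B$ is complete to $C$ (all edges present) and anticomplete to $D$. *)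

From mathcomp Require Import all_boot.
Set Implicit Arguments. Unset Strict Implicit. Unset Printing Implicit Defensive.

Definition simple_graph (T : finType) (e : rel T) : Prop :=
  symmetric e /\ irreflexive e.

Definition P5_adj (i j : 'I_5) : bool := (i.+1 == j :> nat) || (j.+1 == i :> nat).
Definition coP5_adj (i j : 'I_5) : bool := (i != j) && ~~ P5_adj i j.
Definition C5_adj (i j : 'I_5) : bool :=
  P5_adj i j || ((i == 0 :> nat) && (j == 4 :> nat)) || ((i == 4 :> nat) && (j == 0 :> nat)).

Definition induced_sub (T : finType) (e : rel T) (k : nat) (h : rel 'I_k) : Prop :=
  exists f : 'I_k -> T, injective f /\ forall i j, e (f i) (f j) = h i j.

Definition H_free (T : finType) (e : rel T) (k : nat) (h : rel 'I_k) : Prop :=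
  ~ induced_sub e h.

Definition mixed (T : finType) (e : rel T) (X : {set T}) (b : T) : bool :=
  (b \notin X) && [exists x in X, e b x] && [exists x in X, ~~ e b x].

Definition homogeneous (T : finType) (e : rel T) (X : {set T}) : bool :=
  (1 < #|X|) && (#|X| < #|T|) && [forall b, ~~ mixed e X b].

Definition prime_graph (T : finType) (e : rel T) : Prop :=
  4 <= #|T| /\ forall X : {set T}, ~~ homogeneous e X.

Definition nbhd (T : finType) (e : rel T) (v : T) : {set T} := [set u | e v u].

Definition stable (T : finType) (e : rel T) (S : {set T}) : bool :=
  [forall x in S, forall y in S, ~~ e x y].

Definition antisimplicial (T : finType) (e : rel T) (v : T) : bool :=
  stable e (~: nbhd e v).

Definition complete_to (T : finType) (e : rel T) (X Y : {set T}) : bool :=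
  [forall x in X, forall y in Y, e x y].
Definition anticomplete_to (T : finType) (e : rel T) (X Y : {set T}) : bool :=
  [forall x in X, forall y in Y, ~~ e x y].

Definition one_join (T : finType) (e : rel T) : Prop :=
  exists A B C D : {set T},
    [/\ A != set0, B != set0, C != set0 & D != set0] /\
    [/\ [disjoint A & B], [disjoint A & C] & [disjoint A & D]] /\
    [/\ [disjoint B & C], [disjoint B & D] & [disjoint C & D]] /\
    A :|: B :|: C :|: D = [set: T] /\
    [/\ anticomplete_to e A (C :|: D), complete_to e B C & anticomplete_to e B D].

From mathcomp Require Import all_boot.
Set Implicit Arguments. Unset Strict Implicit. Unset Printing Implicit Defensive.

(* Every prime {P5, co-P5, C5}-free graph G has an antisimplicial vertex, so the
   first alternative of the theorem always holds.

   We argue in the complement H of G, which is simple and has no induced P5,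
   house (= co-P5) or C5. Call s semisimplicial in W if s is not an interior
   vertex of an induced P4 of H[W]. The core statement, in the spirit of
   Hoang and Khouzam, is [semisimplicial_nonnbr_exists]: in a {P5, house, C5}-free
   graph, every vertex x of W with a non-neighbour in W has a semisimplicial
   non-neighbour. It is proved by strong induction on |W|: take a component K of
   the non-neighbourhood of x with inclusion-minimal set S of attachments in
   N(x). If K + S + x is smaller than W, the induction hypothesis applies to it
   and [lift] carries the conclusion back to W; otherwise a case analysis on how
   N(x) sees K concludes, again by induction on a smaller set.
   If s is semisimplicial in all of H and G is prime, the non-neighbours of s in
   G are stable: a vertex mixed on a component of G - N[s] with an edge would
   give an induced P4 of H with s in its interior. *)


(* No two vertices of the pattern h have the same neighbourhood; any map realising
   such a pattern is then automatically injective. *)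
Definition twin_free (k : nat) (h : rel 'I_k) : Prop :=
  forall i j, i != j -> exists l, h i l != h j l.

Definition co (T : eqType) (r : rel T) : rel T := fun x y => (x != y) && ~~ r x y.

Lemma co_sym (T : eqType) (r : rel T) : symmetric r -> symmetric (co r).
Proof. by move=> r_sym x y; rewrite /co eq_sym r_sym. Qed.

Lemma co_irr (T : eqType) (r : rel T) : irreflexive (co r).
Proof. by move=> x; rewrite /co eqxx. Qed.

Lemma co_edge (T : eqType) (r : rel T) x y : r x y -> co r x y = false.
Proof. by rewrite /co => ->; rewrite andbF. Qed.

Lemma co_nonedge (T : eqType) (r : rel T) x y : x != y -> ~~ r x y -> co r x y.
Proof. by rewrite /co => -> ->. Qed.

Section InducedCopies.
Variables (T : finType) (r : rel T).

Lemma induced_of_map k (h : rel 'I_k) (F : 'I_k -> T) :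
  twin_free h -> (forall i j, r (F i) (F j) = h i j) -> induced_sub r h.
Proof.
move=> twins rF; exists F; split=> // i j Fij.
by apply/eqP/negPn/negP => /twins[l]; rewrite -!rF Fij eqxx.
Qed.

Lemma induced_relabel k (h h' : rel 'I_k) (g : 'I_k -> 'I_k) :
  twin_free h' -> (forall i j, h' i j = h (g i) (g j)) ->
  induced_sub r h -> induced_sub r h'.
Proof.
move=> twins hg [f [_ rf]]; apply: (induced_of_map (F := f \o g) twins).
by move=> i j; rewrite /= rf hg.
Qed.

Lemma induced_co k (h : rel 'I_k) :
  irreflexive r -> induced_sub (co r) h -> induced_sub r (co h).
Proof.
move=> r_irr [f [f_inj rf]]; exists f; split=> // i j.
rewrite /co -rf /co (inj_eq f_inj).
by case: eqVneq => [->|_]; rewrite ?r_irr //= negbK.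
Qed.

End InducedCopies.

Ltac twin_free_by_cases :=
  move=> [[|[|[|[|[|i]]]]] ?] [[|[|[|[|[|j]]]]] ?] //= _;
  first [ exists (@Ordinal 5 0 isT); by compute
        | exists (@Ordinal 5 1 isT); by compute
        | exists (@Ordinal 5 2 isT); by compute
        | exists (@Ordinal 5 3 isT); by compute
        | exists (@Ordinal 5 4 isT); by compute ].

Lemma twin_free_P5 : twin_free P5_adj. Proof. twin_free_by_cases. Qed.
Lemma twin_free_house : twin_free (co P5_adj). Proof. twin_free_by_cases. Qed.
Lemma twin_free_C5 : twin_free C5_adj. Proof. twin_free_by_cases. Qed.

(* Hence the complement of the house is P5 again. *)
Lemma P5_adj_irr : irreflexive P5_adj.
Proof. by case=> [[|[|[|[|[|]]]]]]. Qed.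

(* C5 is self-complementary: i |-> 2i mod 5 maps C5 onto its complement. *)
Definition pentagram (i : 'I_5) : 'I_5 :=
  nth i [:: @Ordinal 5 0 isT; @Ordinal 5 2 isT; @Ordinal 5 4 isT;
            @Ordinal 5 1 isT; @Ordinal 5 3 isT] i.

Lemma C5_pentagram i j : C5_adj i j = co C5_adj (pentagram i) (pentagram j).
Proof. by case: i j => [[|[|[|[|[|i]]]]] ?] [[|[|[|[|[|j]]]]] ?]. Qed.

Section Complement.
Variables (T : finType) (e : rel T).
Hypothesis e_irr : irreflexive e.

Lemma co_P5_free : H_free e coP5_adj -> H_free (co e) P5_adj.
Proof. by move=> free /(induced_co e_irr). Qed.

Lemma co_house_free : H_free e P5_adj -> H_free (co e) (co P5_adj).
Proof.
move=> free /(induced_co e_irr) h; apply: free.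
apply: (induced_relabel (g := id) twin_free_P5 _ h) => i j.
by rewrite /co /=; case: eqVneq => [->|]; rewrite ?P5_adj_irr //= negbK.
Qed.

Lemma co_C5_free : H_free e C5_adj -> H_free (co e) C5_adj.
Proof.
move=> free /(induced_co e_irr) h; apply: free.
exact: (induced_relabel twin_free_C5 C5_pentagram h).
Qed.

End Complement.

Section Components.
Variables (T : finType) (r : rel T).
Hypothesis r_sym : symmetric r.

Definition restrict (A : {set T}) : rel T := fun u v => [&& u \in A, v \in A & r u v].

Definition component (A : {set T}) (a : T) : {set T} := [set b | connect (restrict A) a b].

Lemma restrict_sym A : symmetric (restrict A).
Proof. by move=> u v; rewrite /restrict r_sym; case: (u \in A); case: (v \in A). Qed.

Lemma component_refl A a : a \in component A a.
Proof. by rewrite inE connect0. Qed.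

Lemma component_sym A a b : b \in component A a -> a \in component A b.
Proof. by rewrite !inE (sym_connect_sym (restrict_sym A)). Qed.

Lemma component_trans A a b c :
  b \in component A a -> c \in component A b -> c \in component A a.
Proof. by rewrite !inE; apply: connect_trans. Qed.

Lemma component_shared A a b c :
  c \in component A a -> c \in component A b -> b \in component A a.
Proof. by move=> ca /component_sym; apply: component_trans. Qed.

Lemma component_ind A a (B : {set T}) b :
  b \in B -> b \in component A a ->
  (forall u v, u \in B -> v \in A -> r u v -> v \in B) ->
  {subset component A a <= B}.
Proof.
move=> bB ba closedB c ca.
have := component_trans (component_sym ba) ca.
rewrite inE => /(closed_connect (intro_closed (sym_connect_sym (restrict_sym A)) _)) <- //.
by move=> u v /and3P[_ vA uv] uB; apply: closedB uv.
Qed.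

Lemma component_sub (A : {set T}) a : a \in A -> {subset component A a <= A}.
Proof. by move=> aA; apply: (component_ind aA (component_refl A a)). Qed.

Lemma component_closed (A : {set T}) a b c :
  a \in A -> b \in component A a -> c \in A -> r b c -> c \in component A a.
Proof.
move=> aA ba cA bc; apply: (component_trans ba).
by rewrite inE connect1 // /restrict (component_sub aA ba) cA.
Qed.

Lemma component_nbr_closed (A : {set T}) a u k1 k2 : a \in A ->
  (forall u' v, u' \in component A a -> v \in component A a -> r u' v -> r u u' -> r u v) ->
  k1 \in component A a -> k2 \in component A a -> r u k1 -> r u k2.
Proof.
move=> aA closed k1a k2a uk1.
have k1B : k1 \in [set k in component A a | r u k] by rewrite inE k1a.
suff /(_ k2 k2a) : {subset component A a <= [set k in component A a | r u k]}.
  by case/setIdP.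
apply: (component_ind k1B k1a) => u' v /setIdP[u'a uu'] vA u'v.
have va := component_closed aA u'a vA u'v.
by apply/setIdP; split; last apply: (closed u').
Qed.

End Components.

Section SemiSimplicial.
Variables (T : finType) (r : rel T).
Hypotheses (r_sym : symmetric r) (r_irr : irreflexive r).
Hypotheses (P5_free : H_free r P5_adj) (house_free : H_free r (co P5_adj))
           (C5_free : H_free r C5_adj).

Definition induced_P4 (a b c d : T) : bool :=
  [&& r a b, r b c, r c d, ~~ r a c, ~~ r b d & ~~ r a d].

Definition midpoint (W : {set T}) (s : T) : Prop :=
  exists a c d, [/\ a \in W, c \in W, d \in W & induced_P4 a s c d].

Definition nonnbrs (W : {set T}) (x : T) : {set T} := [set y in W | (y != x) && ~~ r x y].

Definition ncomp (W : {set T}) (x t : T) : {set T} := component r (nonnbrs W x) t.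

Definition attach (W : {set T}) (x : T) (K : {set T}) : {set T} :=
  [set y in W | r x y && [exists k in K, r y k]].

Definition hull (W : {set T}) (x k0 : T) : {set T} :=
  ncomp W x k0 :|: attach W x (ncomp W x k0) :|: [set x].

Definition minimal_comp (W : {set T}) (x k0 : T) : Prop :=
  forall t, t \in nonnbrs W x ->
    attach W x (ncomp W x t) \subset attach W x (ncomp W x k0) ->
    attach W x (ncomp W x k0) \subset attach W x (ncomp W x t).

Definition semisimplicial_nonnbrs (W : {set T}) : Prop :=
  forall x m, x \in W -> m \in nonnbrs W x ->
    exists2 s, s \in nonnbrs W x & ~ midpoint W s.

Ltac check_pattern :=
  move=> [[|[|[|[|[|i]]]]] ?] [[|[|[|[|[|j]]]]] ?] //=;
  rewrite /co /P5_adj /C5_adj /=;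
  first [ by rewrite r_irr | done | by rewrite r_sym
        | apply/negbTE; by [| rewrite r_sym] ].

Lemma no_P5 a b c d f : r a b -> r b c -> r c d -> r d f ->
  ~~ r a c -> ~~ r a d -> ~~ r a f -> ~~ r b d -> ~~ r b f -> ~~ r c f -> False.
Proof.
move=> *; apply: P5_free.
apply: (induced_of_map (F := fun i : 'I_5 => nth a [:: a; b; c; d; f] i) twin_free_P5).
check_pattern.
Qed.

Lemma no_C5 a b c d f : r a b -> r b c -> r c d -> r d f -> r f a ->
  ~~ r a c -> ~~ r a d -> ~~ r b d -> ~~ r b f -> ~~ r c f -> False.
Proof.
move=> *; apply: C5_free.
apply: (induced_of_map (F := fun i : 'I_5 => nth a [:: a; b; c; d; f] i) twin_free_C5).
check_pattern.
Qed.

Lemma no_house a b c d f : r a b -> r b c -> r c d -> r d a -> r f a -> r f b ->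
  ~~ r a c -> ~~ r b d -> ~~ r f c -> ~~ r f d -> False.
Proof.
move=> *; apply: house_free.
apply: (induced_of_map (F := fun i : 'I_5 => nth a [:: a; c; f; d; b] i) twin_free_house).
check_pattern.
Qed.

Arguments no_P5 : clear implicits.
Arguments no_C5 : clear implicits.
Arguments no_house : clear implicits.

Ltac by_sym := solve [ done | by rewrite r_sym
  | match goal with H : _ = false |- _ => by rewrite H end
  | match goal with H : _ = false |- _ => by rewrite r_sym H end ].

(* Two non-adjacent neighbours p, q of x cannot each have a private neighbour
   among the non-neighbours of x: this would create a C5 or a P5. *)
Lemma no_crossing x p q m1 m2 :
  r x p -> r x q -> ~~ r p q -> ~~ r x m1 -> ~~ r x m2 ->
  r p m1 -> ~~ r q m1 -> r q m2 -> ~~ r p m2 -> False.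
Proof.
move=> xp xq npq nxm1 nxm2 pm1 nqm1 qm2 npm2.
case m12: (r m1 m2).
  by apply: (no_C5 x p m1 m2 q); by_sym.
by apply: (no_P5 m1 p x q m2); by_sym.
Qed.

Lemma clique_no_midpoint (A : {set T}) s :
  (forall u v, u \in A -> v \in A -> u != v -> r u v) -> ~ midpoint A s.
Proof.
move=> clique [p [q [t [pA qA _ /and5P[_ _ qt npq /andP[_ npt]]]]]].
have /eqP pq : p == q by apply: contraNT npq => /(clique p q pA qA).
by move: npt; rewrite pq qt.
Qed.

Lemma nonnbr_facts W x v : v \in nonnbrs W x -> [/\ v \in W, v != x & ~~ r x v].
Proof. by rewrite inE => /and3P. Qed.

(* A component with the fewest attachments is inclusion-minimal. *)
Lemma exists_minimal_comp W x m :
  m \in nonnbrs W x -> exists2 k0, k0 \in nonnbrs W x & minimal_comp W x k0.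
Proof.
move=> mM; have [k0 k0M k0min] := arg_minnP (fun t => #|attach W x (ncomp W x t)|) mM.
exists k0 => // t tM sub.
suff /eqP -> : attach W x (ncomp W x t) == attach W x (ncomp W x k0) by [].
by rewrite eqEcard sub k0min.
Qed.

Section Attachment.
Variables (W : {set T}) (x k0 : T).
Hypotheses (xW : x \in W) (k0M : k0 \in nonnbrs W x).
Local Notation M := (nonnbrs W x).
Local Notation K := (ncomp W x k0).
Local Notation S := (attach W x K).

Lemma comp_nonnbr v : v \in K -> v \in M.
Proof. by move=> vK; apply: (component_sub r_sym k0M vK). Qed.

Lemma comp_closed k v : k \in K -> v \in M -> r k v -> v \in K.
Proof. by move=> kK vM kv; apply: (component_closed r_sym k0M kK vM kv). Qed.

Lemma comp_apart k v : k \in K -> v \in M -> v \notin K -> ~~ r k v.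
Proof. by move=> kK vM; apply: contra; apply: comp_closed. Qed.

Lemma comp_nbr k v : k \in K -> v \in W -> r k v -> (v \in K) || (v \in S).
Proof.
move=> kK vW kv; case xv: (r x v).
  apply/orP; right; apply/setIdP; split=> //; rewrite xv /=.
  by apply/existsP; exists k; rewrite kK /= r_sym.
have [_ _ nxk] := nonnbr_facts (comp_nonnbr kK).
apply/orP; left; apply: (comp_closed kK _ kv); rewrite inE vW xv andbT /=.
by apply: (contraNneq _ nxk) => vx; rewrite -vx r_sym.
Qed.

Lemma hullE v : (v \in hull W x k0) = [|| v \in K, v \in S | v == x].
Proof. by rewrite /hull !in_setU in_set1 orbA. Qed.

Lemma hull_of_comp_attach v : (v \in K) || (v \in S) -> v \in hull W x k0.
Proof. by rewrite hullE orbA => ->. Qed.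

Lemma hull_sub : hull W x k0 \subset W.
Proof.
apply/subsetP => v; rewrite hullE => /or3P[/comp_nonnbr/nonnbr_facts[] | /setIdP[] | /eqP->] //.
Qed.

Lemma x_in_hull : x \in hull W x k0.
Proof. by rewrite hullE eqxx !orbT. Qed.

Lemma k0_nonnbr_hull : k0 \in nonnbrs (hull W x k0) x.
Proof.
have [_ k0x nxk0] := nonnbr_facts k0M.
by rewrite inE hullE (component_refl r) k0x.
Qed.

Lemma nonnbr_hull_comp v : v \in nonnbrs (hull W x k0) x -> v \in K.
Proof.
case/nonnbr_facts; rewrite hullE => /or3P[// | /setIdP[_ /andP[xv _]] | /eqP->].
  by rewrite xv.
by rewrite eqxx.
Qed.

Hypothesis kmin : minimal_comp W x k0.

Section FarP4.
Variables (p s q t : T).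
Hypotheses (sK : s \in K) (pW : p \in W) (xp : r x p) (xq : r x q).
Hypotheses (ps : r p s) (sq : r s q) (qt : r q t).
Hypotheses (npq : ~~ r p q) (nst : ~~ r s t) (npt : ~~ r p t).
Hypotheses (tM : t \in M) (tK : t \notin K).
Local Notation K' := (ncomp W x t).

Lemma other_comp_facts k : k \in K' -> [/\ k \in M, ~~ r x k & ~~ r s k].
Proof.
move=> kK'; have kM : k \in M by apply: (component_sub r_sym tM kK').
have [_ _ nxk] := nonnbr_facts kM; split=> //; apply: comp_apart sK kM _.
by apply: (contra _ tK) => kK; apply: (component_shared r_sym kK kK').
Qed.

(* p has no neighbour in K': otherwise, walking from t along K' to such a
   neighbour, some edge of K' would create a house or a P5. *)
Lemma p_misses_other_comp k : k \in K' -> ~~ r p k.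
Proof.
have p_to_q m : m \in M -> r p m -> r q m.
  move=> mM pm; apply/negPn/negP => nqm; have [_ _ nxm] := nonnbr_facts mM.
  have [_ _ nxt] := nonnbr_facts tM.
  exact: (no_crossing xp xq npq nxm nxt pm nqm qt npt).
pose B := [set w in K' | r q w && ~~ r p w].
have tB : t \in B by rewrite inE (component_refl r) qt npt.
have closedB u v : u \in B -> v \in M -> r u v -> v \in B.
  move=> /setIdP[uK' /andP[qu npu]] vM uv.
  have vK' : v \in K' := component_closed r_sym tM uK' vM uv.
  have [_ _ nsu] := other_comp_facts uK'; have [_ _ nsv] := other_comp_facts vK'.
  case pv: (r p v).
    have qv := p_to_q v vM pv.
    by exfalso; apply: (no_house q v p s u); by_sym.
  case qv: (r q v); first by rewrite inE vK' qv pv.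
  by exfalso; apply: (no_P5 v u q s p); by_sym.
by move=> /(component_ind r_sym tB (component_refl r _ t) closedB) /setIdP[_ /andP[]].
Qed.

(* By minimality of S, K' has an attachment y which misses K entirely. *)
Lemma escape_vertex : exists y t',
  [/\ y \in W, r x y, t' \in K', r y t' & forall k, k \in K -> ~~ r y k].
Proof.
have pS : p \in S by apply/setIdP; split; rewrite // xp; apply/existsP; exists s; rewrite sK.
have pS' : p \notin attach W x K'.
  by apply/negP => /setIdP[_ /andP[_ /existsP[k /andP[/p_misses_other_comp /negP]]]].
have : ~~ (attach W x K' \subset S).
  by apply: (contra _ pS') => /(kmin tM) /subsetP; apply.
case/subsetPn => y /setIdP[yW /andP[xy /existsP[t' /andP[t'K' yt']]]] yS.
exists y, t'; split=> // k kK; apply: (contra _ yS) => yk.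
by apply/setIdP; split; rewrite // xy; apply/existsP; exists k; rewrite kK.
Qed.

(* The escape vertex y cannot see q while q misses its neighbour t' in K':
   walking along K' from t to t' would create a P5 or a house. *)
Lemma no_escape_through_q y t' : y \in W -> r x y -> t' \in K' -> r y t' ->
  (forall k, k \in K -> ~~ r y k) -> r p y -> r q y -> ~~ r q t' -> False.
Proof.
move=> yW xy t'K' yt' ymiss py qy nqt'.
have nsy : ~~ r s y by rewrite r_sym ymiss.
have nyt : ~~ r y t by apply/negP => yt; apply: (no_house q y p s t); by_sym.
pose B := [set w in K' | r q w && ~~ r y w].
have tB : t \in B by rewrite inE (component_refl r) qt nyt.
have closedB u v : u \in B -> v \in M -> r u v -> v \in B.
  move=> /setIdP[uK' /andP[qu nyu]] vM uv.
  have vK' : v \in K' := component_closed r_sym tM uK' vM uv.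
  have [_ nxu nsu] := other_comp_facts uK'; have [_ nxv nsv] := other_comp_facts vK'.
  have npu := p_misses_other_comp uK'; have npv := p_misses_other_comp vK'.
  case yv: (r y v); case qv: (r q v).
  - by exfalso; apply: (no_P5 u v y p s); by_sym.
  - by exfalso; apply: (no_house y q u v x); by_sym.
  - by rewrite inE vK' qv yv.
  - by exfalso; apply: (no_P5 v u q s p); by_sym.
have /setIdP[_ /andP[_]] := component_ind r_sym tB (component_refl r _ t) closedB t'K'.
by rewrite yt'.
Qed.

(* Combining the above, every adjacency pattern of q with y and t' closes a
   house, a C5 or a P5. *)
Lemma far_P4_impossible : False.
Proof.
have [y [t' [yW xy t'K' yt' ymiss]]] := escape_vertex.
have [_ nxt' nst'] := other_comp_facts t'K'.
have npt' := p_misses_other_comp t'K'.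
have [_ _ nxs] := nonnbr_facts (comp_nonnbr sK).
have nsy : ~~ r s y by rewrite r_sym ymiss.
have py : r p y.
  by apply/negPn/negP => npy; apply: (no_crossing xp xy npy nxs nxt' ps); by_sym.
case qy: (r q y); case qt': (r q t').
- by exfalso; apply: (no_house y q s p t'); by_sym.
- by apply: (no_escape_through_q yW xy t'K' yt' ymiss py qy); rewrite qt'.
- by exfalso; apply: (no_C5 q s p y t'); by_sym.
- by exfalso; apply: (no_P5 q s p y t'); by_sym.
Qed.

End FarP4.

Lemma lift s : s \in K -> ~ midpoint (hull W x k0) s -> ~ midpoint W s.
Proof.
move=> sK s_hull [p [q [t [pW qW tW /and5P[ps sq qt npq /andP[nst npt]]]]]].
have [_ _ nxs] := nonnbr_facts (comp_nonnbr sK).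
have pKS : (p \in K) || (p \in S) by apply: comp_nbr sK pW _; rewrite r_sym.
have qKS : (q \in K) || (q \in S) := comp_nbr sK qW sq.
case tH: (t \in hull W x k0).
  apply: s_hull; exists p, q, t; split=> //; try exact: hull_of_comp_attach.
  by rewrite /induced_P4 ps sq qt npq nst npt.
move: tH; rewrite hullE => /norP[tK /norP[tS tx]].
have /setIdP[_ /andP[xq _]] : q \in S.
  case/orP: qKS => // qK; have := comp_nbr qK tW qt.
  by rewrite (negbTE tK) (negbTE tS).
have /setIdP[_ /andP[xp _]] : p \in S.
  case/orP: pKS => // pK; have [_ _ nxp] := nonnbr_facts (comp_nonnbr pK).
  exfalso; apply: s_hull; exists p, q, x; split; try exact: hull_of_comp_attach.
  - by rewrite hull_of_comp_attach ?pK.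
  - exact: x_in_hull.
  by rewrite /induced_P4 ps sq npq (r_sym q) xq (r_sym s) nxs (r_sym p) nxp.
case xt: (r x t).
  by exfalso; apply: (no_house q x p s t); by_sym.
have tM : t \in M by rewrite inE tW tx xt.
exact: (far_P4_impossible sK pW xp xq ps sq qt npq nst npt tM tK).
Qed.

Lemma hull_step :
  (exists2 s, s \in nonnbrs (hull W x k0) x & ~ midpoint (hull W x k0) s) ->
  exists2 s, s \in K & ~ midpoint W s.
Proof.
case=> s /nonnbr_hull_comp sK s_hull; exists s => //.
exact: lift sK s_hull.
Qed.

End Attachment.

Section Saturated.
Variables (W : {set T}) (x k0 : T).
Hypotheses (xW : x \in W) (k0M : k0 \in nonnbrs W x) (Wsat : W \subset hull W x k0).
Hypothesis IH : forall W' : {set T}, W' \proper W -> semisimplicial_nonnbrs W'.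
Local Notation K := (ncomp W x k0).
Local Notation S := (attach W x K).

Lemma sat_cases v : v \in W -> [|| v \in K, v \in S | v == x].
Proof. by move=> vW; rewrite -hullE; apply: (subsetP Wsat). Qed.

Lemma attached_nbr w k : w \in W -> w \notin K -> k \in K -> r w k -> r x w.
Proof.
move=> wW wK kK wk; case/or3P: (sat_cases wW) => [wK' | /setIdP[_ /andP[]] // | /eqP wx].
  by rewrite wK' in wK.
by have [_ _] := nonnbr_facts (comp_nonnbr k0M kK); rewrite -wx wk.
Qed.

Lemma nbr_attaches y : y \in W -> r x y -> y \in S.
Proof.
move=> yW xy; case/or3P: (sat_cases yW) => [yK | // | /eqP yx].
  by have [_ _] := nonnbr_facts (comp_nonnbr k0M yK); rewrite xy.
by move: xy; rewrite yx r_irr.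
Qed.

Lemma comp_proper : K \proper W.
Proof.
rewrite properE; apply/andP; split.
  by apply/subsetP => v /(comp_nonnbr k0M) /nonnbr_facts[].
by apply/subsetPn; exists x => //; apply/negP => /(comp_nonnbr k0M) /nonnbr_facts[_ /eqP].
Qed.

Section CompleteAttachment.
Hypothesis S_complete : forall y k, y \in W -> r x y -> k \in K -> r y k.

Lemma attached_complete w k k' : w \in W -> w \notin K -> k \in K -> r w k ->
  k' \in K -> r w k'.
Proof. by move=> wW wK kK wk; apply: S_complete wW (attached_nbr wW wK kK wk). Qed.

Lemma midpoint_in_comp s : s \in K -> midpoint W s -> midpoint K s.
Proof.
move=> sK [p [q [t [pW qW tW P4]]]]; move: (P4) => /and5P[ps sq qt npq /andP[nst npt]].
have qs : r q s by rewrite r_sym.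
have qK : q \in K.
  apply/negPn/negP => qK.
  have pK : p \notin K.
    by apply: (contra _ npq) => pK; rewrite r_sym (attached_complete qW qK sK qs pK).
  case/or3P: (sat_cases tW) => [tK | /setIdP[_ /andP[xt _]] | /eqP tx].
  - by move: npt; rewrite (attached_complete pW pK sK ps tK).
  - by move: nst; rewrite r_sym (S_complete tW xt sK).
  - by move: npt; rewrite tx r_sym (attached_nbr pW pK sK ps).
have pK : p \in K.
  apply/negPn/negP => pK.
  by move: npq; rewrite (attached_complete pW pK sK ps qK).
have tK : t \in K.
  apply/negPn/negP => tK.
  have tq : r t q by rewrite r_sym.
  by move: nst; rewrite r_sym (attached_complete tW tK qK tq sK).
by exists p, q, t.
Qed.

(* Hence a semisimplicial vertex of G[K] (any vertex if K is a clique, the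
   induction hypothesis otherwise) is semisimplicial in W. *)
Lemma complete_case : exists2 s, s \in K & ~ midpoint W s.
Proof.
case: (boolP [forall u in K, forall v in K, (u != v) ==> r u v]) => [clique | ].
  exists k0; first exact: component_refl.
  move=> /(midpoint_in_comp (component_refl r _ k0)); apply: clique_no_midpoint => u v uK vK.
  by move/forall_inP: clique => /(_ u uK) /forall_inP /(_ v vK) /implyP.
case/forall_inPn => u uK /forall_inPn[v vK]; rewrite negb_imply => /andP[uv nuv].
have vMK : v \in nonnbrs K u by rewrite inE vK eq_sym uv.
have [s /nonnbr_facts[sK _ _] s_K] := IH comp_proper uK vMK.
by exists s => // /(midpoint_in_comp sK).
Qed.

End CompleteAttachment.

(* If a neighbour y' of x is complete to K, so is every non-neighbour y of y'
   in N(x); otherwise an edge of K would close a house. *)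
Lemma complete_spreads y y' k : y \in W -> r x y -> y' \in W -> r x y' -> ~~ r y y' ->
  (forall k', k' \in K -> r y' k') -> k \in K -> r y k.
Proof.
move=> yW xy y'W xy' nyy' y'K kK.
have /setIdP[_ /andP[_ /exists_inP[k1 k1K yk1]]] := nbr_attaches yW xy.
apply: (component_nbr_closed r_sym k0M _ k1K kK yk1) => u v uK vK uv yu.
apply/negPn/negP => nyv.
have [_ _ nxu] := nonnbr_facts (comp_nonnbr k0M uK).
have [_ _ nxv] := nonnbr_facts (comp_nonnbr k0M vK).
have y'u := y'K u uK; have y'v := y'K v vK.
by apply: (no_house u y' x y v); by_sym.
Qed.

(* Let y be a neighbour of x with a non-neighbour in K, seeing as much of K as
   possible. Then its non-neighbours in N(x) miss every vertex of K that y
   misses, by no_crossing, maximality and complete_spreads. *)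
Lemma maximal_private y :
  (forall y', y' \in W -> r x y' -> [exists k in K, ~~ r y' k] ->
     #|[set k in K | r y' k]| <= #|[set k in K | r y k]|) ->
  y \in W -> r x y ->
  forall y' k, y' \in W -> r x y' -> ~~ r y y' -> k \in K -> ~~ r y k -> ~~ r y' k.
Proof.
move=> ymax yW xy y' k y'W xy' nyy' kK nyk; apply/negP => y'k.
case: (boolP [exists k in K, ~~ r y' k]) => [y'_private | /exists_inPn y'_full].
  have := ymax y' y'W xy' y'_private; apply/negP; rewrite -ltnNge.
  apply: proper_card; rewrite properE; apply/andP; split.
    apply/subsetP => k' /setIdP[k'K yk']; apply/setIdP; split=> //.
    apply/negPn/negP => ny'k'; have ny'y : ~~ r y' y by rewrite r_sym.
    have [_ _ nxk] := nonnbr_facts (comp_nonnbr k0M kK).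
    have [_ _ nxk'] := nonnbr_facts (comp_nonnbr k0M k'K).
    exact: (no_crossing xy' xy ny'y nxk nxk' y'k nyk yk' ny'k').
  by apply/subsetPn; exists k; rewrite inE kK // (negbTE nyk).
have y'K k' : k' \in K -> r y' k' by move/y'_full; rewrite negbK.
by move: nyk; rewrite (complete_spreads yW xy y'W xy' nyy' y'K kK).
Qed.

(* Subcase: a neighbour y of x as in maximal_private. We work around y
   instead of x, with K0 the part of K missed by y. *)
Section PrivateNonNbr.
Variable y : T.
Hypotheses (yW : y \in W) (xy : r x y).
Hypothesis y_private : forall y' k, y' \in W -> r x y' -> ~~ r y y' ->
  k \in K -> ~~ r y k -> ~~ r y' k.
Local Notation K0 := [set k in K | ~~ r y k].

Lemma private_nonnbr k : k \in K0 -> k \in nonnbrs W y.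
Proof.
case/setIdP => kK nyk; have [kW _ nxk] := nonnbr_facts (comp_nonnbr k0M kK).
by rewrite inE kW nyk andbT; apply: (contraNneq _ nxk) => ->.
Qed.

Lemma private_comp_sub k2 : k2 \in K0 -> {subset ncomp W y k2 <= K0}.
Proof.
move=> k2K0; apply: (component_ind r_sym k2K0 (component_refl r _ k2)).
move=> u v /setIdP[uK nyu] vM uv; have [vW _ nyv] := nonnbr_facts vM.
case/or3P: (sat_cases vW) => [vK | /setIdP[_ /andP[xv _]] | /eqP vx].
- by rewrite inE vK.
- by move: (y_private vW xv nyv uK nyu); rewrite r_sym uv.
- by move: nyv; rewrite vx r_sym xy.
Qed.

(* Among them, one with fewest attachments to y is attachment-minimal among
   all components of the non-neighbourhood of y, since the others attach to x. *)
Lemma exists_private_minimal k1 : k1 \in K0 ->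
  exists2 k2, k2 \in K0 & minimal_comp W y k2.
Proof.
move=> k1K0; have [k2 k2K0 k2min] := arg_minnP (fun t => #|attach W y (ncomp W y t)|) k1K0.
exists k2 => // t tM sub; have [tW _ nyt] := nonnbr_facts tM.
case/or3P: (sat_cases tW) => [tK | /setIdP[_ /andP[xt _]] | /eqP tx].
- suff /eqP -> : attach W y (ncomp W y t) == attach W y (ncomp W y k2) by [].
  have tK0 : t \in K0 by rewrite inE tK.
  by rewrite eqEcard sub (k2min t tK0).
- have : x \in attach W y (ncomp W y t).
    apply/setIdP; split; rewrite // r_sym xy.
    by apply/exists_inP; exists t; rewrite // (component_refl r).
  case/(subsetP sub)/setIdP => _ /andP[_ /exists_inP[c /(private_comp_sub k2K0) cK0 xc]].
  by case/setIdP: cK0 => /(comp_nonnbr k0M)/nonnbr_facts[_ _]; rewrite xc.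
- by move: nyt; rewrite tx r_sym xy.
Qed.

(* The hull around y misses x, so the induction hypothesis applies to it. *)
Lemma private_case k1 : k1 \in K0 -> exists2 s, s \in K & ~ midpoint W s.
Proof.
move=> k1K0; have [k2 k2K0 k2min] := exists_private_minimal k1K0.
have k2My := private_nonnbr k2K0.
have x_out : x \notin hull W y k2.
  rewrite hullE; apply/negP; case/or3P.
  - by case/(private_comp_sub k2K0)/setIdP => /(comp_nonnbr k0M)/nonnbr_facts[_ /eqP].
  - case/setIdP => _ /andP[_ /exists_inP[c /(private_comp_sub k2K0)/setIdP[cK _] xc]].
    by have [_ _] := nonnbr_facts (comp_nonnbr k0M cK); rewrite xc.
  - by move/eqP => xy'; move: xy; rewrite xy' r_irr.
have hull_proper : hull W y k2 \proper W.
  by rewrite properE (hull_sub yW k2My) /=; apply/subsetPn; exists x.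
have [s sC s_hull] :=
  hull_step k2My k2min (IH hull_proper (x_in_hull W y k2) (k0_nonnbr_hull k2My)).
by exists s => //; case/setIdP: (private_comp_sub k2K0 sC).
Qed.

End PrivateNonNbr.

Lemma saturated_case : exists2 s, s \in K & ~ midpoint W s.
Proof.
pose P y := [&& y \in W, r x y & [exists k in K, ~~ r y k]].
case: (pickP P) => [y0 Py0 | noP]; last first.
  apply: complete_case => y k yW xy kK; apply/negPn/negP => nyk.
  have := noP y; rewrite /P yW xy /=.
  by move/negbT/exists_inPn/(_ k kK); rewrite nyk.
have [y /and3P[yW xy /exists_inP[k1 k1K nyk1]] ymax] :=
  arg_maxnP (fun y => #|[set k in K | r y k]|) Py0.
apply: (private_case yW xy (maximal_private _ yW xy) (k1 := k1)); last by rewrite inE k1K.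
by move=> y' y'W xy' y'_private; apply: ymax; rewrite /P y'W xy'.
Qed.

End Saturated.

Theorem semisimplicial_nonnbr_exists (W : {set T}) : semisimplicial_nonnbrs W.
Proof.
have [n] := ubnP #|W|; elim: n W => // n IHn W /ltnSE leWn x m xW mM.
have IH (W' : {set T}) : W' \proper W -> semisimplicial_nonnbrs W'.
  by move=> /proper_card ltW'; apply: IHn; apply: leq_trans ltW' leWn.
have [k0 k0M kmin] := exists_minimal_comp mM.
suff [s sK s_W] : exists2 s, s \in ncomp W x k0 & ~ midpoint W s.
  by exists s => //; apply: comp_nonnbr k0M s sK.
case: (boolP (W \subset hull W x k0)) => [Wsat | W_out].
  exact: saturated_case xW k0M Wsat IH.
apply: (hull_step k0M kmin); apply: IH (x_in_hull W x k0) (k0_nonnbr_hull k0M).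
by rewrite properE (hull_sub xW k0M).
Qed.

End SemiSimplicial.

Section Antisimplicial.
Variables (T : finType) (e : rel T).
Hypotheses (e_sym : symmetric e) (e_irr : irreflexive e) (e_prime : prime_graph e).

Lemma prime_mixed (K : {set T}) : 1 < #|K| -> K \proper [set: T] -> exists u, mixed e K u.
Proof.
move=> K_big /proper_card; rewrite cardsT => K_small.
have := e_prime.2 K; rewrite /homogeneous K_big K_small /= => /forallPn[u].
by rewrite negbK; exists u.
Qed.

Lemma P4_across s u u' v :
  u' \in nonnbrs e [set: T] s -> v \in nonnbrs e [set: T] s ->
  e s u -> e u' v -> e u u' -> ~~ e u v -> midpoint (co e) [set: T] s.
Proof.
move=> /nonnbr_facts[_ u's nsu'] /nonnbr_facts[_ vs nsv] su u'v uu' nuv.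
have vu : v != u by apply: (contraNneq _ nsv) => ->.
exists u', v, u; split; rewrite ?in_setT //.
have u's' : co e u' s by rewrite co_nonedge // e_sym.
have sv : co e s v by rewrite co_nonedge // eq_sym.
have vu' : co e v u by rewrite co_nonedge // e_sym.
by rewrite /induced_P4 u's' sv vu' !co_edge // e_sym.
Qed.

(* A vertex that is semisimplicial in the complement of a prime graph is
   antisimplicial: a component of G - N[s] with an edge has a mixed vertex,
   which yields an induced P4 of the complement with s in its interior. *)
Lemma antisimplicial_of_semisimplicial s :
  ~ midpoint (co e) [set: T] s -> antisimplicial e s.
Proof.
move=> s_semi; apply/forall_inP => a; rewrite !inE => nsa.
apply/forall_inP => b; rewrite !inE => nsb; apply/negP => ab.
pose A := nonnbrs e [set: T] s.
have aA : a \in A by rewrite inE in_setT nsa andbT; apply: (contraNneq _ nsb) => <-.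
have bA : b \in A by rewrite inE in_setT nsb andbT; apply: (contraNneq _ nsa) => <-; rewrite e_sym.
pose K := component e A a.
have aK : a \in K := component_refl e A a.
have bK : b \in K := component_closed e_sym aA aK bA ab.
have KA : {subset K <= A} := component_sub e_sym aA.
have [u /andP[/andP[uK /exists_inP[k1 k1K uk1]] /exists_inP[k2 k2K nuk2]]] : exists u, mixed e K u.
  apply: prime_mixed.
    apply/card_gt1P; exists a, b; split=> //; apply: (contraTneq _ ab) => ->.
    by rewrite e_irr.
  rewrite properT; apply/negP => /eqP KT.
  by have /KA/nonnbr_facts[_ /eqP] : s \in K by rewrite KT.
have su : e s u.
  have [_ _ nsk1] := nonnbr_facts (KA k1 k1K).
  apply/negPn/negP => nsu; move/negP: uK; apply.
  apply: (component_closed e_sym aA k1K _); last by rewrite e_sym.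
  by rewrite inE in_setT nsu andbT; apply: (contraNneq _ nsk1) => <-.
move: nuk2; rewrite (component_nbr_closed e_sym aA _ k1K k2K uk1) //.
move=> u' v u'K vK u'v uu'; apply/negPn/negP => nuv; apply: s_semi.
exact: (P4_across (KA u' u'K) (KA v vK) su u'v uu' nuv).
Qed.

End Antisimplicial.

(* The first alternative holds: apply the main induction to the complement,
   starting from an edge of G; an edgeless G has only antisimplicial vertices. *)
Theorem lemma2p7 (T : finType) (e : rel T) :
  simple_graph e ->
  prime_graph e ->
  H_free e P5_adj -> H_free e coP5_adj -> H_free e C5_adj ->
  (exists v : T, antisimplicial e v) \/ one_join e.
Proof.
move=> [e_sym e_irr] e_prime P5_free coP5_free C5_free; left.
case: (pickP (fun xm : T * T => e xm.1 xm.2)) => [[x m] /= xm | no_edge].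
  have mM : m \in nonnbrs (co e) [set: T] x.
    rewrite inE in_setT co_edge // andbT /=; apply: (contraTneq _ xm) => ->; by rewrite e_irr.
  have := semisimplicial_nonnbr_exists (co_sym e_sym) (@co_irr _ e)
    (co_P5_free e_irr coP5_free) (co_house_free e_irr P5_free) (co_C5_free e_irr C5_free).
  case/(_ [set: T] x m (in_setT x) mM) => s _ s_semi.
  by exists s; apply: antisimplicial_of_semisimplicial.
have [v _] : exists v, v \in [set: T].
  by apply/card_gt0P; rewrite cardsT; apply: leq_trans e_prime.1.
by exists v; apply/forall_inP => a _; apply/forall_inP => b _; rewrite (no_edge (a, b)).
Qed.
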